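(* For every $\gamma\in[0,1)$, the function $h_\gamma(\mu)=\mu+\frac{\gamma}{1-\gamma}\gamma^{\mu}$ is monotonically increasing in $\mu$ on $(0,\infty)$. *)

(* R : realType, real exponent via powR (a `^ x),
   which satisfies 0 `^ x = 0 for x <> 0, matching gamma^mu at gamma = 0. *)
From mathcomp Require Import all_boot all_order all_algebra.
From mathcomp Require Import all_classical all_reals all_analysis.
Import Order.TTheory GRing.Theory Num.Theory.
Local Open Scope ring_scope.

Definition h_gamma {R : realType} (gamma mu : R) : R :=
  mu + gamma / (1 - gamma) * (gamma `^ mu).

From mathcomp Require Import all_boot all_order all_algebra.
From mathcomp Require Import all_classical all_reals all_analysis.
From mathcomp Require Import ring lra.
Import Order.TTheory GRing.Theory Num.Theory.
Local Open Scope ring_scope.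

(** Write [mu2 = mu1 + d] with [d >= 0].  Then
    [h(mu2) - h(mu1) = d - gamma/(1-gamma) * gamma^mu1 * (1 - gamma^d)], and
    since [gamma^mu1 <= 1] it suffices that [gamma (1 - gamma^d) <= d (1 - gamma)].
    This follows from [1 - gamma^d <= - d ln gamma] (convexity of [expR]) and
    [- gamma ln gamma <= 1 - gamma] (that is, [ln y <= y - 1] at [y = 1/gamma]). *)

Section PowRBounds.
Variable R : realType.
Implicit Types x r : R.

Lemma subr1_le_mulr_ln x : 0 < x -> x - 1 <= x * ln x.
Proof.
move=> x_gt0; have := expR_ge1Dx (- ln x).
rewrite expRN lnK ?posrE // -(ler_pM2l x_gt0) mulfV ?gt_eqF //.
by rewrite mulrDr mulr1 mulrN; lra.
Qed.

Lemma ge1Dmul_ln_powR x r : 0 < x -> 1 + r * ln x <= x `^ r.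
Proof. by move=> x_gt0; rewrite /powR gt_eqF //; exact: expR_ge1Dx. Qed.

Lemma mulr_subr1_powR_le x r : 0 <= x -> 0 <= r -> x * (1 - x `^ r) <= r * (1 - x).
Proof.
rewrite le_eqVlt => /predU1P[<- r_ge0|x_gt0 r_ge0].
  by rewrite mul0r subr0 mulr1.
have xlnx_le : - (x * ln x) <= 1 - x by have := subr1_le_mulr_ln x x_gt0; lra.
apply: (@le_trans _ _ (r * - (x * ln x))); last exact: ler_wpM2l.
have powR_ge := ge1Dmul_ln_powR x r x_gt0.
rewrite mulrN mulrCA -mulrN ler_pM2l //; lra.
Qed.

Lemma powR_le1 x r : 0 <= x <= 1 -> 0 <= r -> x `^ r <= 1.
Proof.
case/andP; rewrite le_eqVlt => /predU1P[<- _ r_ge0|x_gt0 x_le1 r_ge0].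
  by rewrite /powR eqxx; case: (r == 0).
by rewrite -(powRr0 x) ger_powR // x_gt0.
Qed.

End PowRBounds.

Lemma h_gamma_nondecreasing (R : realType) (gamma : R) : 0 <= gamma < 1 ->
  {in Num.nneg &, {homo h_gamma gamma : x y / x <= y}}.
Proof.
case/andP; rewrite le_eqVlt => /predU1P[<- _|g_gt0 g_lt1] x y.
  by rewrite /h_gamma !mul0r !addr0.
rewrite !nnegrE => x_ge0 _ le_xy.
have g_01 : 0 <= gamma <= 1 by rewrite !ltW.
have -> : y = x + (y - x) by rewrite addrC subrK.
rewrite /h_gamma powRD ?(gt_eqF g_gt0) ?implybT //.
set d := y - x; set c := gamma / (1 - gamma).
have d_ge0 : 0 <= d by rewrite subr_ge0.
have c_ge0 : 0 <= c by rewrite divr_ge0 ?subr_ge0 ?ltW.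
have gd_le1 : gamma `^ d <= 1 by exact: powR_le1.
have gx_le1 : gamma `^ x <= 1 by exact: powR_le1.
have cd_le : c * (1 - gamma `^ d) <= d.
  by rewrite mulrAC ler_pdivrMr ?subr_gt0 // mulr_subr1_powR_le // ltW.
have gx_le : c * gamma `^ x * (1 - gamma `^ d) <= c * (1 - gamma `^ d).
  by rewrite mulrAC ler_piMr // mulr_ge0 // subr_ge0.
have -> : c * (gamma `^ x * gamma `^ d)
          = c * gamma `^ x - c * gamma `^ x * (1 - gamma `^ d) by ring.
lra.
Qed.

Theorem lemma2 (R : realType) (gamma : R) (hg0 : 0 <= gamma) (hg1 : gamma < 1)
  (mu1 mu2 : R) (h1 : 0 < mu1) (h12 : mu1 <= mu2) :
  h_gamma gamma mu1 <= h_gamma gamma mu2.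
Proof.
apply: h_gamma_nondecreasing; rewrite ?hg0 ?hg1 // nnegrE ltW //.
exact: lt_le_trans h12.
Qed.
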